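(* Let $T:\mathbb{Z}_{\ge 0}\to\mathbb{R}$ be given by $T(0)=0$ and $T(2n)=T(2n-1)=n$ for all $n\ge 1$. Then $T(mn) = T(m)T(n) + T(m-1)T(n-1)$ for all integers $m,n\ge 1$. *)

From Stdlib Require Import Reals Arith.
Open Scope R_scope.

Fixpoint T (k : nat) : R :=
  match k with
  | O => 0
  | S O => 1
  | S (S j) => T j + 1
  end.

(* T k = (k + r k) / 2 where r k in {0, 1} is the parity of k, and
   T (m - 1) = (m - r m) / 2.  Since r (m n) = r m r n, the identity becomes
   the polynomial identity
   2 (m n + r m r n) = (m + r m)(n + r n) + (m - r m)(n - r n). *)

From Stdlib Require Import Reals Arith Lra Lia.
Open Scope R_scope.

Definition odd_indicator (k : nat) : R := if Nat.even k then 0 else 1.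

Lemma odd_indicator_succ (k : nat) :
  odd_indicator (S k) = 1 - odd_indicator k.
Proof.
  unfold odd_indicator; rewrite Nat.even_succ, <- Nat.negb_even.
  destruct (Nat.even k); simpl; lra.
Qed.

Lemma odd_indicator_mul (m n : nat) :
  odd_indicator (m * n) = odd_indicator m * odd_indicator n.
Proof.
  unfold odd_indicator; rewrite Nat.even_mul.
  destruct (Nat.even m), (Nat.even n); simpl; lra.
Qed.

Lemma T_closed_form (k : nat) : T k = (INR k + odd_indicator k) / 2.
Proof.
  assert (both : T k = (INR k + odd_indicator k) / 2 /\
                 T (S k) = (INR (S k) + odd_indicator (S k)) / 2).
  { induction k as [|k [IHk IHSk]].
    - unfold odd_indicator; simpl; split; lra.
    - split; [exact IHSk|].
      change (T (S (S k))) with (T k + 1).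
      rewrite IHk, !odd_indicator_succ, !S_INR; lra. }
  exact (proj1 both).
Qed.

Lemma T_pred_closed_form (m : nat) :
  (1 <= m)%nat -> T (m - 1) = (INR m - odd_indicator m) / 2.
Proof.
  intros hm; destruct m as [|m]; [lia|].
  replace (S m - 1)%nat with m by lia.
  rewrite T_closed_form, odd_indicator_succ, S_INR; lra.
Qed.

Theorem lemma3 (m n : nat) (hm : (1 <= m)%nat) (hn : (1 <= n)%nat) :
  T (m * n) = T m * T n + T (m - 1) * T (n - 1).
Proof.
  rewrite (T_pred_closed_form m hm), (T_pred_closed_form n hn),
    !T_closed_form, mult_INR, odd_indicator_mul.
  field.
Qed.
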